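(* Fix $\alpha\in(0,1/2)$ and $q_1,q_3\in(0,1)$, and define $m^*(3/4,3/4)=16\alpha$, $m^*(3/4,1/4)=m^*(1/4,3/4)=\frac{8(1-2\alpha)}{3}$, $m^*(1/4,1/4)=\frac{16\alpha}{9}$, $m^*=\frac{16(4\alpha+3)}{9}$, $\overline{q}^*=\frac{8\alpha+3}{8\alpha+6}$, $\overline{\lambda}^*=1/m^*$, $$\overline{q}=\frac{1}{m^*}\Big[\big(m^*(\tfrac34,\tfrac34)+m^*(\tfrac34,\tfrac14)\big)q_3+\big(m^*(\tfrac14,\tfrac34)+m^*(\tfrac14,\tfrac14)\big)q_1\Big],$$ $$\overline{\lambda}=\frac{1}{m^*}\Big(m^*(\tfrac34,\tfrac34)\tfrac{1-q_3}{4}+m^*(\tfrac34,\tfrac14)\tfrac{3(1-q_3)}{4}+m^*(\tfrac14,\tfrac34)\tfrac{1-q_1}{4}+m^*(\tfrac14,\tfrac14)\tfrac{3(1-q_1)}{4}\Big).$$ Suppose one of the following holds: (1) $\alpha=1/4$ and $6q_3+2q_1>5$; (2) $\alpha<1/4$ and $(q_1,q_3)\in\{q_1\ge 1/4,\ 6q_3+2q_1>5\}\cup\{q_1<1/4,\ (12\alpha+3)q_3+(3-4\alpha)q_1>8\alpha+3\}$; (3) $\alpha>1/4$ and $(q_1,q_3)\in\{q_1\le 1/4,\ 6q_3+2q_1>5\}\cup\{q_1>1/4,\ (12\alpha+3)q_3+(3-4\alpha)q_1>8\alpha+3\}$. Then $\overline{q}>\overline{q}^*$ and $\overline{\lamb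da}<\overline{\lambda}^*$.
   Context: Interpretation: $m^*(x,e)$ is the steady-state mass of type-$(x,e)$ users under the status quo (quality $q^*(x)=x$, churn probability $(1-q(x))(1-e)$ per period, inflow masses $\alpha,1/2-\alpha,1/2-\alpha,\alpha$ for types $(3/4,3/4),(3/4,1/4),(1/4,3/4),(1/4,1/4)$); $\overline{q},\overline{\lambda}$ are the one-period experimental ARQ and churn rate of the treatment with qualities $q_1$ (segment $x=1/4$) and $q_3$ (segment $x=3/4$); $\overline{q}^*,\overline{\lambda}^*$ are the status quo values. *)

From Stdlib Require Import Reals Lra.
Open Scope R_scope.

(* Steady-state masses m*(x,e) of the status quo, as given in the paper. *)
Definition m33 (alpha : R) : R := 16 * alpha.
Definition m31 (alpha : R) : R := 8 * (1 - 2 * alpha) / 3.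
Definition m13 (alpha : R) : R := 8 * (1 - 2 * alpha) / 3.
Definition m11 (alpha : R) : R := 16 * alpha / 9.
Definition mstar (alpha : R) : R := 16 * (4 * alpha + 3) / 9.

Definition qbar_star (alpha : R) : R := (8 * alpha + 3) / (8 * alpha + 6).
Definition lambdabar_star (alpha : R) : R := 1 / mstar alpha.

(* Experimental ARQ and churn rate with qualities q1 (x = 1/4), q3 (x = 3/4). *)
Definition qbar (alpha q1 q3 : R) : R :=
  (1 / mstar alpha) *
  ((m33 alpha + m31 alpha) * q3 + (m13 alpha + m11 alpha) * q1).

Definition lambdabar (alpha q1 q3 : R) : R :=
  (1 / mstar alpha) *
  (m33 alpha * ((1 - q3) / 4) + m31 alpha * (3 * (1 - q3) / 4)
   + m13 alpha * ((1 - q1) / 4) + m11 alpha * (3 * (1 - q1) / 4)).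

From Stdlib Require Import Reals Lra Psatz.
Open Scope R_scope.

(* Both differences to the status quo are positive multiples of affine forms
   in (q1, q3): [qbar - qbar*] of [qbar_gain] and [lambdabar* - lambdabar] of
   [churn_gain].  Both forms vanish at the status quo (q1, q3) = (1/4, 3/4),
   and [qbar_gain = (2 alpha + 1/2) churn_gain + 2 (1 - 4 alpha) (q1 - 1/4)].
   The three cases of the corollary are exactly the half-planes in q1 where
   the last term has the sign that lets one positive form force the other. *)

Definition qbar_gain (alpha q1 q3 : R) : R :=
  (12 * alpha + 3) * q3 + (3 - 4 * alpha) * q1 - (8 * alpha + 3).

Definition churn_gain (q1 q3 : R) : R := 6 * q3 + 2 * q1 - 5.

Lemma qbar_sub_star (alpha q1 q3 : R) :
  4 * alpha + 3 <> 0 ->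
  qbar alpha q1 q3 - qbar_star alpha
  = qbar_gain alpha q1 q3 / (2 * (4 * alpha + 3)).
Proof.
  intros Ha.
  unfold qbar, qbar_star, qbar_gain, mstar, m33, m31, m13, m11.
  field; lra.
Qed.

Lemma lambdabar_star_sub (alpha q1 q3 : R) :
  4 * alpha + 3 <> 0 ->
  lambdabar_star alpha - lambdabar alpha q1 q3
  = 3 * churn_gain q1 q3 / (16 * (4 * alpha + 3)).
Proof.
  intros Ha.
  unfold lambdabar, lambdabar_star, churn_gain, mstar, m33, m31, m13, m11.
  field; lra.
Qed.

Lemma qbar_gt_star (alpha q1 q3 : R) :
  -3 / 4 < alpha -> 0 < qbar_gain alpha q1 q3 ->
  qbar alpha q1 q3 > qbar_star alpha.
Proof.
  intros Ha Hg.
  assert (Hd : 0 < qbar_gain alpha q1 q3 / (2 * (4 * alpha + 3)))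
    by (apply Rdiv_lt_0_compat; lra).
  rewrite <- qbar_sub_star in Hd by lra.
  lra.
Qed.

Lemma lambdabar_lt_star (alpha q1 q3 : R) :
  -3 / 4 < alpha -> 0 < churn_gain q1 q3 ->
  lambdabar alpha q1 q3 < lambdabar_star alpha.
Proof.
  intros Ha Hg.
  assert (Hd : 0 < 3 * churn_gain q1 q3 / (16 * (4 * alpha + 3)))
    by (apply Rdiv_lt_0_compat; lra).
  rewrite <- lambdabar_star_sub in Hd by lra.
  lra.
Qed.

Lemma qbar_gain_decomp (alpha q1 q3 : R) :
  qbar_gain alpha q1 q3
  = (2 * alpha + 1 / 2) * churn_gain q1 q3 + 2 * (1 - 4 * alpha) * (q1 - 1 / 4).
Proof. unfold qbar_gain, churn_gain; field. Qed.

Lemma gains_pos_of_churn_gain (alpha q1 q3 : R) :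
  -1 / 4 < alpha -> 0 <= (1 - 4 * alpha) * (q1 - 1 / 4) ->
  6 * q3 + 2 * q1 > 5 ->
  0 < qbar_gain alpha q1 q3 /\ 0 < churn_gain q1 q3.
Proof.
  intros Ha Hs Hc.
  assert (Hc' : 0 < churn_gain q1 q3) by (unfold churn_gain; lra).
  split; [|exact Hc'].
  rewrite qbar_gain_decomp.
  assert (0 < (2 * alpha + 1 / 2) * churn_gain q1 q3)
    by (apply Rmult_lt_0_compat; lra).
  lra.
Qed.

Lemma gains_pos_of_qbar_gain (alpha q1 q3 : R) :
  -1 / 4 < alpha -> (1 - 4 * alpha) * (q1 - 1 / 4) <= 0 ->
  (12 * alpha + 3) * q3 + (3 - 4 * alpha) * q1 > 8 * alpha + 3 ->
  0 < qbar_gain alpha q1 q3 /\ 0 < churn_gain q1 q3.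
Proof.
  intros Ha Hs Hq.
  assert (Hq' : 0 < qbar_gain alpha q1 q3) by (unfold qbar_gain; lra).
  split; [exact Hq'|].
  rewrite qbar_gain_decomp in Hq'.
  nra.
Qed.

Theorem corollary1 (alpha q1 q3 : R) :
  0 < alpha < 1 / 2 ->
  0 < q1 < 1 ->
  0 < q3 < 1 ->
  ( (alpha = 1 / 4 /\ 6 * q3 + 2 * q1 > 5)
    \/ (alpha < 1 / 4 /\
         ((q1 >= 1 / 4 /\ 6 * q3 + 2 * q1 > 5)
          \/ (q1 < 1 / 4 /\
              (12 * alpha + 3) * q3 + (3 - 4 * alpha) * q1 > 8 * alpha + 3)))
    \/ (alpha > 1 / 4 /\
         ((q1 <= 1 / 4 /\ 6 * q3 + 2 * q1 > 5)
          \/ (q1 > 1 / 4 /\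
              (12 * alpha + 3) * q3 + (3 - 4 * alpha) * q1 > 8 * alpha + 3))) ) ->
  qbar alpha q1 q3 > qbar_star alpha /\
  lambdabar alpha q1 q3 < lambdabar_star alpha.
Proof.
  intros Ha _ _ Hregion.
  assert (Hgains : 0 < qbar_gain alpha q1 q3 /\ 0 < churn_gain q1 q3).
  { destruct Hregion as [[-> Hc] | [[Hlt [[Hq1 Hc] | [Hq1 Hq]]]
                                  | [Hgt [[Hq1 Hc] | [Hq1 Hq]]]]].
    - apply gains_pos_of_churn_gain; lra.
    - apply gains_pos_of_churn_gain; [lra | nra | lra].
    - apply gains_pos_of_qbar_gain; [lra | nra | lra].
    - apply gains_pos_of_churn_gain; [lra | nra | lra].
    - apply gains_pos_of_qbar_gain; [lra | nra | lra]. }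
  destruct Hgains as [Hq Hc].
  split; [apply qbar_gt_star | apply lambdabar_lt_star]; lra.
Qed.
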